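(* Let $\|\cdot\|$ be any submultiplicative matrix norm on the algebra $M_n(\mathbb C)$ of complex $n\times n$ matrices. For $C\ge1$ and $N\in\mathbb N$ put $r^N_C(x)=C\cdot\max\{\|x\|,\|x^{-1}\|\}^N$, $x\in\mathrm{GL}_n(\mathbb C)$. Then the functions $r^N_C$ majorize all semicharacters on $\mathrm{GL}_n(\mathbb C)$: for every semicharacter $f$ on $\mathrm{GL}_n(\mathbb C)$ there exist $C\ge1$ and $N\in\mathbb N$ with $f(x)\le r^N_C(x)$ for all $x\in\mathrm{GL}_n(\mathbb C)$.
   Context: A semicharacter on a complex Lie group $G$ is a locally bounded function $f:G\to[1,+\infty)$ satisfying $f(xy)\le f(x)f(y)$ for all $x,y\in G$. A matrix norm $\|\cdot\|$ is submultiplicative if $\|xy\|\le\|x\|\,\|y\|$. *)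

From HB Require Import structures.
From mathcomp Require Import all_boot all_order all_algebra.
From mathcomp Require Import all_classical all_reals all_analysis.
From mathcomp Require Export complex.
Export Order.TTheory GRing.Theory Num.Theory.

Set Implicit Arguments.
Unset Strict Implicit.
Unset Printing Implicit Defensive.

Local Open Scope ring_scope.

(* Equip C = R[i] with its usual (modulus) metric topology, as analysis does
   for generic numFieldTypes via R^o. *)
HB.instance Definition _ (R : rcfType) := PseudoPointedMetric.copy R[i] R[i]^o.

(* The topology on
   R[i] is the one of its modulus (numFieldTopology), and 'M[R[i]]_n carries the
   product (entrywise) topology from matrix_topology: the usual topology of
   M_n(C) = C^(n*n). *)

Definition submult_mxnorm (R : realType) (n : nat) (nm : 'M[R[i]]_n -> R) : Prop :=
  [/\ (forall A, 0 <= nm A),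
      (forall A, nm A = 0 -> A = 0),
      (forall (c : R[i]) A, nm (c *: A) = Normc.normc c * nm A),
      (forall A B, nm (A + B) <= nm A + nm B)
    & (forall A B, nm (A *m B) <= nm A * nm B)].

(* A semicharacter on GL_n(C) = { x : 'M_n | x \in unitmx }, given as a function
   on M_n(C) whose values outside GL_n(C) are irrelevant. *)
Definition semicharacter_GL (R : realType) (n : nat) (f : 'M[R[i]]_n -> R) : Prop :=
  [/\ (forall x, x \in unitmx -> 1 <= f x),
      (forall x y, x \in unitmx -> y \in unitmx -> f (x *m y) <= f x * f y)
    &
      (forall x : 'M[R[i]]_n, x \in unitmx -> exists M : R,
          \forall y \near x, y \in unitmx -> f y <= M)].

Definition rNC (R : realType) (n : nat) (nm : 'M[R[i]]_n -> R) (C : R) (N : nat)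
  (x : 'M[R[i]]_n) : R :=
  C * (Num.max (nm x) (nm (invmx x))) ^+ N.

From mathcomp Require Import all_boot all_order all_algebra.
From mathcomp Require Import all_classical all_reals all_analysis.
From mathcomp Require Import complex spectral.
From mathcomp Require Import ring lra.
Import Order.TTheory GRing.Theory Num.Theory.

Set Implicit Arguments.
Unset Strict Implicit.
Unset Printing Implicit Defensive.

Local Open Scope ring_scope.
Local Open Scope complex_scope.

(* Write x = P W (polar decomposition) with W unitary and P = Q^-1 diag(r) Q
   positive, Q unitary.  Local boundedness gives f <= M near 1, and
   submultiplicativity gives f (y ^ m) <= f y ^ m.  The eigenvalues of W lie on
   the unit circle, and their 2^K-th roots are uniformly close to 1, so
   f W <= M ^ 2^K for a fixed K.  By equivalence of norms on M_n(C), the r_k and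
   their inverses are at most t = c * max(|x|, |x^-1|); taking 2^j-th roots with
   j the least integer such that t <= (1 + eps)^(2^j) brings diag(r) close to 1,
   so f P <= M ^ 2^j, and M ^ 2^j is polynomial in t. *)

Section ComplexRoots.
Variable R : rcfType.
Local Notation normc := (@Normc.normc R).

Lemma normc_ge0 (z : R[i]) : 0 <= normc z.
Proof. by case: z => a b; rewrite /= sqrtr_ge0. Qed.

Lemma normc_real (a : R) : normc a%:C = `|a|.
Proof. by rewrite /= expr0n /= addr0 sqrtr_sqr. Qed.

Lemma normc_sqr (z : R[i]) : normc z ^+ 2 = complex.Re z ^+ 2 + complex.Im z ^+ 2.
Proof. by case: z => a b /=; rewrite sqr_sqrtr // addr_ge0 // sqr_ge0. Qed.

Lemma normc_conj (z : R[i]) : normc z^* = normc z.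
Proof. by case: z => a b /=; rewrite sqrrN. Qed.

Lemma mulc_conj (z : R[i]) : z * z^* = (normc z ^+ 2)%:C.
Proof. by rewrite -sqr_normc rmorphXn. Qed.

Lemma normc_sum (I : Type) (r : seq I) (P : pred I) (F : I -> R[i]) :
  normc (\sum_(i <- r | P i) F i) <= \sum_(i <- r | P i) normc (F i).
Proof.
elim/big_ind2: _ => [|x1 y1 x2 y2 h1 h2|//]; first by rewrite Normc.normc0.
exact: le_trans (le_normcD _ _) (lerD h1 h2).
Qed.

Lemma normc_sqrtc (z : R[i]) : normc (sqrtc z) = Num.sqrt (normc z).
Proof.
rewrite -{2}[z]sqr_sqrtc expr2 Normc.normcM -expr2 sqrtr_sqr.
by rewrite ger0_norm ?normc_ge0.
Qed.

Lemma iter_sqrtcX k (z : R[i]) : iter k (@sqrtc R) z ^+ (2 ^ k) = z.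
Proof. by elim: k => // k IHk; rewrite iterS expnS exprM sqr_sqrtc IHk. Qed.

Lemma iter_sqrtc_real k (a : R) :
  0 <= a -> iter k (@sqrtc R) a%:C = (iter k Num.sqrt a)%:C.
Proof.
elim: k a => // k IHk a a0; rewrite !iterSr -IHk ?sqrtr_ge0 //.
by rewrite sqrtc_sqrtr // lecR.
Qed.

Lemma Re_le1_unit (z : R[i]) : normc z = 1 -> -1 <= complex.Re z <= 1.
Proof.
move=> z1; rewrite -ler_norml -(expr_le1 (n := 2)) // real_normK ?num_real //.
by rewrite -(expr1n _ 2) -z1 normc_sqr lerDl sqr_ge0.
Qed.

Lemma subr1_Re_sqrtc_unit (z : R[i]) : normc z = 1 ->
  1 - complex.Re (sqrtc z) <= (1 - complex.Re z) / 2%:R.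
Proof.
move=> z1; have /andP[lb ub] := Re_le1_unit z1.
have -> : complex.Re (sqrtc z) = Num.sqrt ((1 + complex.Re z) / 2%:R).
  by case: z z1 {lb ub} => a b /= ->.
set y := (1 + _) / 2%:R; have y0 : 0 <= y by rewrite /y; lra.
have : y <= Num.sqrt y.
  rewrite -{1}(ger0_norm y0) -sqrtr_sqr; apply: ler_wsqrtr.
  by rewrite expr2 ler_piMr //= /y; lra.
by rewrite /y; lra.
Qed.

Lemma normc_subr1_unit (z : R[i]) : normc z = 1 ->
  normc (z - 1) ^+ 2 = 2%:R * (1 - complex.Re z).
Proof.
move=> z1; have := normc_sqr z; rewrite z1 expr1n normc_sqr.
by case: z {z1} => a b /=; rewrite subr0 => h; nra.
Qed.

Lemma iter_sqrtc_unit k (z : R[i]) : normc z = 1 ->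
  normc (iter k (@sqrtc R) z - 1) ^+ 2 <= 4%:R / 2%:R ^+ k.
Proof.
move=> z1; suff [w1 Rew] : normc (iter k (@sqrtc R) z) = 1 /\
    1 - complex.Re (iter k (@sqrtc R) z) <= 2%:R / 2%:R ^+ k.
  by rewrite normc_subr1_unit //; move: Rew; set q := 2%:R ^+ k; lra.
elim: k => [|k [w1 Rew]]; first by have /andP[] := Re_le1_unit z1; lra.
rewrite iterS normc_sqrtc w1 sqrtr1; split => //.
apply: le_trans (subr1_Re_sqrtc_unit w1) _.
rewrite exprS invfM; move: Rew; set q := (2%:R ^+ k)^-1; lra.
Qed.

End ComplexRoots.

Section RealRoots.
Variable R : rcfType.

Lemma iter_sqrtr_gt0 k (r : R) : 0 < r -> 0 < iter k Num.sqrt r.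
Proof. by elim: k => //= k IHk r0; rewrite sqrtr_gt0 IHk. Qed.

Lemma iter_sqrtr_le k (a r : R) :
  0 <= a -> r <= a ^+ (2 ^ k) -> iter k Num.sqrt r <= a.
Proof.
move=> a0; elim: k r => [|k IHk] r; first by rewrite expr1.
rewrite iterSr expnS mulnC exprM => /ler_wsqrtr; rewrite sqrtr_sqr.
by rewrite ger0_norm ?exprn_ge0 //; apply: IHk.
Qed.

Lemma iter_sqrtrV k (r : R) :
  0 <= r -> iter k Num.sqrt r^-1 = (iter k Num.sqrt r)^-1.
Proof.
elim: k r => // k IHk r r0; rewrite !iterSr -IHk ?sqrtr_ge0 //.
by rewrite sqrtrV.
Qed.

Lemma normr_subr1_le (w d : R) :
  0 < w -> w <= 1 + d -> w^-1 <= 1 + d -> `|w - 1| <= d.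
Proof.
move=> w0 wd Vwd; have : w * w^-1 <= w * (1 + d) by rewrite ler_pM2l.
rewrite mulfV ?lt0r_neq0 // ler_norml; move: wd; nra.
Qed.

End RealRoots.

Section Archimedean.
Variable R : archiRealFieldType.

Lemma exists_exprn_ge (a b : R) : 1 < a -> exists N, b <= a ^+ N.
Proof.
move=> a1; have bernoulli N : 1 + (a - 1) *+ N <= a ^+ N.
  elim: N => [|N IHN]; first by rewrite mulr0n addr0 expr0.
  rewrite mulrS exprS; apply: le_trans (ler_wpM2l (ltW (lt_trans ltr01 a1)) IHN).
  rewrite -mulr_natr; have : 0 <= (a - 1) * N%:R by rewrite mulr_ge0 ?ler0n //; lra.
  nra.
have a10 : 0 < a - 1 by rewrite subr_gt0.
exists (Num.bound `|b / (a - 1)|); apply: le_trans (bernoulli _).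
have := le_lt_trans (ler_norm _) (archi_boundP (normr_ge0 (b / (a - 1)))).
rewrite ltr_pdivrMr // => lt_b; rewrite -mulr_natr; nra.
Qed.

Lemma exists_exprn2_between (a t : R) : 1 < a -> 1 <= t ->
  exists j, t <= a ^+ (2 ^ j) /\ a ^+ (2 ^ j) <= a * t ^+ 2.
Proof.
move=> a1 t1; have [N tN] := exists_exprn_ge t a1.
have a0 : 0 <= a := le_trans ler01 (ltW a1).
have t0 : 0 <= t := le_trans ler01 t1.
have tN2 : t <= a ^+ (2 ^ N).
  by apply: le_trans tN _; rewrite ler_eXn2l // ltnW // ltn_expl.
have [j tj minj] := ex_minnP (ex_intro (fun j => t <= a ^+ (2 ^ j)) N tN2).
exists j; split => //; case: j tj minj => [|j] _ minj.
  by rewrite expn0 expr1 ler_peMr // exprn_ege1.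
have ltj : a ^+ (2 ^ j) < t by rewrite ltNge; apply/negP => /minj; rewrite ltnn.
rewrite expnS mulnC exprM; apply: le_trans (_ : t ^+ 2 <= _).
  by rewrite lerXn2r ?nnegrE ?exprn_ge0 // ltW.
by rewrite ler_peMl ?exprn_ge0 // ltW.
Qed.

Lemma exprn2_ge_poly (a M : R) : 1 < a -> 0 <= M -> exists N, forall t, 1 <= t ->
  exists j, t <= a ^+ (2 ^ j) /\ M ^+ (2 ^ j) <= a ^+ N * t ^+ (2 * N).
Proof.
move=> a1 M0; have [N MN] := exists_exprn_ge M a1; exists N => t t1.
have [j [tj ajt]] := exists_exprn2_between a1 t1; exists j; split => //.
have a0 : 0 <= a := le_trans ler01 (ltW a1).
have t0 : 0 <= t := le_trans ler01 t1.
apply: le_trans (_ : (a ^+ N) ^+ (2 ^ j) <= _).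
  by rewrite lerXn2r ?nnegrE ?exprn_ge0.
rewrite -exprM [(N * _)%N]mulnC exprM [t ^+ _]exprM -exprMn.
by rewrite lerXn2r ?nnegrE ?exprn_ge0 ?mulr_ge0 ?sqr_ge0.
Qed.

End Archimedean.

Section DiagConj.
Variables (R : rcfType) (n : nat).
Local Open Scope sesquilinear_scope.
Local Notation normc := (@Normc.normc R).
Implicit Types (Q X : 'M[R[i]]_n) (a b : 'rV[R[i]]_n).

Definition diagconj Q a := invmx Q *m diag_mx a *m Q.

Lemma diagconjM Q a b : Q \in unitmx ->
  diagconj Q a *m diagconj Q b = diagconj Q (\row_j (a 0 j * b 0 j)).
Proof.
by move=> Qu; rewrite /diagconj !mulmxA (mulmxK Qu) -(mulmxA (invmx Q)) mulmx_diag.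
Qed.

Lemma diagconj1 Q : Q \in unitmx -> diagconj Q (const_mx 1) = 1%:M.
Proof.
move=> Qu; rewrite /diagconj (_ : diag_mx _ = 1%:M) ?mulmx1 ?mulVmx //.
by apply/matrixP => i j; rewrite !mxE.
Qed.

Lemma diagconj_unit Q a : Q \in unitmx -> (forall k, a 0 k != 0) ->
  diagconj Q a \in unitmx.
Proof.
move=> Qu a0; rewrite !unitmx_mul unitmx_inv Qu andbT unitmxE det_diag unitfE.
exact/prodf_neq0.
Qed.

Lemma diagconj_real_unit Q (r : 'rV[R]_n) : Q \in unitmx -> (forall k, 0 < r 0 k) ->
  diagconj Q (map_mx (real_complex R) r) \in unitmx.
Proof.
move=> Qu r_gt0; apply: diagconj_unit Qu _ => k; rewrite mxE.
by rewrite -(rmorph0 (real_complex R)) (inj_eq (@complexI R)) gt_eqF.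
Qed.

Lemma diagconjK Q a : Q \in unitmx -> Q *m diagconj Q a *m invmx Q = diag_mx a.
Proof. by move=> Qu; rewrite /diagconj !mulmxA (mulmxV Qu) mul1mx (mulmxK Qu). Qed.

Lemma diagconj_inj Q : Q \in unitmx -> injective (diagconj Q).
Proof.
move=> Qu a b eq_ab; have /matrixP eq_diag : diag_mx a = diag_mx b.
  by rewrite -(diagconjK a Qu) -(diagconjK b Qu) eq_ab.
by apply/rowP => k; have := eq_diag k k; rewrite !mxE eqxx !mulr1n.
Qed.

Lemma diagconj_adj Q a : Q \is unitarymx ->
  (diagconj Q a)^t* = diagconj Q (map_mx Num.conj a).
Proof.
move=> Qunitary; rewrite /diagconj invmx_unitary // !trmx_mul !map_mxM trmxCK.
by rewrite tr_diag_mx map_diag_mx mulmxA.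
Qed.

Lemma normc_unitary_entry Q i j : Q \is unitarymx -> normc (Q i j) <= 1.
Proof.
move=> /unitarymxP /matrixP /(_ i i); rewrite !mxE eqxx /= => row1.
have : \sum_k normc (Q i k) ^+ 2 = 1.
  apply: (@complexI R); rewrite rmorph_sum rmorph1; apply: etrans row1.
  by apply: eq_bigr => k _; rewrite !mxE rmorphXn; exact: normCK.
rewrite (bigD1 j) //= => sum1; have : normc (Q i j) ^+ 2 <= 1.
  by rewrite -sum1 lerDl sumr_ge0 // => k _; rewrite sqr_ge0.
by have := normc_ge0 (Q i j); nra.
Qed.

Lemma normc_diagconj_subr1 Q a (eps : R) i j : Q \is unitarymx ->
  (forall k, normc (a 0 k - 1) <= eps) ->
  normc ((1%:M - diagconj Q a) i j) <= n%:R * eps.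
Proof.
move=> Qunitary a_eps; have Qu := unitarymx_unit Qunitary.
have -> : (1%:M - diagconj Q a) i j = \sum_k invmx Q i k * (1 - a 0 k) * Q k j.
  rewrite -(mulVmx Qu) !mxE -sumrB; apply: eq_bigr => k _.
  by rewrite mul_mx_diag !mxE; ring.
apply: le_trans (normc_sum _ _ _) _.
rewrite (_ : n%:R * eps = \sum_(k < n) eps); last first.
  by rewrite sumr_const card_ord mulr_natl.
apply: ler_sum => k _; rewrite !Normc.normcM -[normc (1 - _)]normcN opprB.
have Qik : normc (invmx Q i k) <= 1.
  by rewrite invmx_unitary //; apply: normc_unitary_entry; rewrite trmxC_unitary.
rewrite -[eps]mul1r -[1 * eps]mulr1.
apply: ler_pM; [|exact: normc_ge0|apply: ler_pM|exact: normc_unitary_entry] => //.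
- by rewrite mulr_ge0 ?normc_ge0.
- exact: normc_ge0.
- exact: normc_ge0.
Qed.

End DiagConj.

Section UnitaryPolar.
Variables (R : rcfType) (n : nat).
Local Open Scope sesquilinear_scope.
Local Notation normc := (@Normc.normc R).
Implicit Types (Q W X x : 'M[R[i]]_n).

Lemma unitary_normalmx W : W \is unitarymx -> W \is normalmx.
Proof.
move=> Wunitary; apply/normalmxP; rewrite (unitarymxP Wunitary) -invmx_unitary //.
by rewrite mulVmx // unitarymx_unit.
Qed.

Lemma unitary_diagconj W : W \is unitarymx ->
  exists Q d, [/\ Q \is unitarymx, W = diagconj Q d & forall k, normc (d 0 k) = 1].
Proof.
move=> Wunitary; have /orthomx_spectralP WE := unitary_normalmx Wunitary.
have Qunitary := spectral_unitarymx W; have Qu := unitarymx_unit Qunitary.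
set Q := spectralmx W in WE Qunitary Qu *; set d := spectral_diag W in WE *.
exists Q, d; split => // k.
have := unitarymxP Wunitary; rewrite WE -/(diagconj _ _) diagconj_adj //.
rewrite (diagconjM _ _ Qu) -(diagconj1 Qu) => /(diagconj_inj Qu) /rowP /(_ k).
rewrite !mxE mulc_conj -(rmorph1 (real_complex R)) => /(@complexI R) d1.
by have := normc_ge0 (d 0 k); nra.
Qed.

Definition row_norm2 X k := \sum_j normc (X k j) ^+ 2.

Lemma row_norm2_ge0 X k : 0 <= row_norm2 X k.
Proof. by apply: sumr_ge0 => j _; apply: sqr_ge0. Qed.

Lemma gram_diag X k : (X *m X^t*) k k = (row_norm2 X k)%:C.
Proof.
rewrite !mxE rmorph_sum; apply: eq_bigr => j _.
by rewrite !mxE mulc_conj.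
Qed.

Lemma gram_spectral x (Q := spectralmx (x *m x^t*)) :
  x *m x^t* = diagconj Q (\row_k (row_norm2 (Q *m x) k)%:C).
Proof.
have Qunitary : Q \is unitarymx := spectral_unitarymx _.
have Qu := unitarymx_unit Qunitary.
have HE : x *m x^t* = diagconj Q (spectral_diag (x *m x^t*)).
  by apply/orthomx_spectralP/normalmxP; rewrite trmx_mul map_mxM trmxCK.
rewrite {1}HE; congr diagconj; apply/rowP => k; rewrite mxE -gram_diag.
have -> : spectral_diag (x *m x^t*) 0 k = diag_mx (spectral_diag (x *m x^t*)) k k.
  by rewrite mxE eqxx mulr1n.
by rewrite -(diagconjK _ Qu) -HE (invmx_unitary Qunitary) trmx_mul map_mxM !mulmxA.
Qed.

Lemma row_norm2_spectral_inv x (Q := spectralmx (x *m x^t*)) k : x \in unitmx ->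
  row_norm2 (Q *m x) k * row_norm2 (Q *m (invmx x)^t*) k = 1.
Proof.
move=> xu; have Qunitary : Q \is unitarymx := spectral_unitarymx _.
have Qu := unitarymx_unit Qunitary.
have gramE : diag_mx (\row_k (row_norm2 (Q *m x) k)%:C) = Q *m (x *m x^t*) *m Q^t*.
  by rewrite [in RHS]gram_spectral -(invmx_unitary Qunitary) diagconjK.
have xVx : x^t* *m (invmx x)^t* = 1%:M.
  by rewrite -map_mxM -trmx_mul mulVmx // trmx1 map_mx1.
have : diag_mx (\row_k (row_norm2 (Q *m x) k)%:C) *m
    ((Q *m (invmx x)^t*) *m (Q *m (invmx x)^t*)^t*) = 1%:M.
  rewrite gramE trmx_mul map_mxM trmxCK !mulmxA (mulmxKtV _ Qunitary (erefl _)).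
  rewrite -[Q *m x *m x^t* *m _]mulmxA xVx mulmx1 -[Q *m x *m _]mulmxA (mulmxV xu).
  by rewrite mulmx1; apply/unitarymxP.
move=> /matrixP /(_ k k); rewrite mul_diag_mx mxE gram_diag !mxE eqxx /=.
by rewrite -rmorphM -(rmorph1 (real_complex R)) => /(@complexI R).
Qed.

(* P is the positive square root of x x^*, read off its spectral decomposition,
   and W := P^-1 x. *)
Lemma polar_diagconj x : x \in unitmx ->
  exists (Q W : 'M[R[i]]_n) (r : 'rV[R]_n), [/\ Q \is unitarymx, W \is unitarymx,
    x = diagconj Q (map_mx (real_complex R) r) *m W &
    forall k, [/\ 0 < r 0 k, r 0 k ^+ 2 = row_norm2 (Q *m x) k
                & (r 0 k ^+ 2)^-1 = row_norm2 (Q *m (invmx x)^t*) k]].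
Proof.
move=> xu; pose Q := spectralmx (x *m x^t*); pose rho := row_norm2 (Q *m x).
have Qunitary : Q \is unitarymx := spectral_unitarymx _.
have Qu := unitarymx_unit Qunitary.
have rho_sig k : rho k * row_norm2 (Q *m (invmx x)^t*) k = 1.
  exact: row_norm2_spectral_inv.
have rho_gt0 k : 0 < rho k.
  rewrite lt0r row_norm2_ge0 andbT; apply: contra_eqN (rho_sig k) => /eqP ->.
  by rewrite mul0r eq_sym oner_eq0.
pose r := \row_k Num.sqrt (rho k).
have r_gt0 k : 0 < r 0 k by rewrite mxE sqrtr_gt0.
have r2 k : r 0 k ^+ 2 = rho k by rewrite mxE sqr_sqrtr // ltW.
clearbody r.
pose P := diagconj Q (map_mx (real_complex R) r).
pose Pi := diagconj Q (\row_k ((r 0 k)^-1)%:C).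
have PPi : P *m Pi = 1%:M.
  rewrite (diagconjM _ _ Qu) -(diagconj1 Qu); congr diagconj; apply/rowP => k.
  by rewrite !mxE -rmorphM mulfV ?rmorph1 ?lt0r_neq0.
have Pi_adj : Pi^t* = Pi.
  rewrite (diagconj_adj _ Qunitary); congr diagconj; apply/rowP => k.
  by rewrite !mxE; apply: conjc_real.
exists Q, (Pi *m x), r; split; [exact: Qunitary| |by rewrite mulmxA PPi mul1mx|].
  apply/unitarymxP; rewrite trmx_mul map_mxM Pi_adj mulmxA -(mulmxA Pi) gram_spectral.
  rewrite -/Q !(diagconjM _ _ Qu) -(diagconj1 Qu); congr diagconj; apply/rowP => k.
  rewrite !mxE -!rmorphM -(rmorph1 (real_complex R)) -/rho -r2; congr (_%:C).
  have rk0 := lt0r_neq0 (r_gt0 k).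
  by rewrite expr2 mulrA mulVf // mul1r mulfV.
move=> k; split; rewrite ?r2 //.
by apply: (mulfI (lt0r_neq0 (rho_gt0 k))); rewrite rho_sig mulfV ?lt0r_neq0.
Qed.

Lemma row_norm2_unitary_le Q X (A : R) k : Q \is unitarymx ->
  (forall i j, normc (X i j) <= A) -> row_norm2 (Q *m X) k <= (n%:R ^+ 2 * A) ^+ 2.
Proof.
move=> Qunitary X_le; have n_gt0 : (0 < n)%N := leq_ltn_trans (leq0n k) (ltn_ord k).
have A0 : 0 <= A := le_trans (normc_ge0 _) (X_le k k).
have entry_le j : normc ((Q *m X) k j) <= n%:R * A.
  rewrite mxE; apply: le_trans (normc_sum _ _ _) _.
  rewrite (_ : n%:R * A = \sum_(l < n) A); last first.
    by rewrite sumr_const card_ord mulr_natl.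
  apply: ler_sum => l _; rewrite Normc.normcM -[A]mul1r.
  by rewrite ler_pM ?normc_ge0 ?normc_unitary_entry.
apply: le_trans (_ : \sum_(j < n) (n%:R * A) ^+ 2 <= _).
  apply: ler_sum => j _; rewrite ler_pXn2r ?nnegrE ?normc_ge0 ?mulr_ge0 //.
rewrite sumr_const card_ord -[(_ ^+ 2) *+ n]mulr_natl.
rewrite (_ : (n%:R ^+ 2 * A) ^+ 2 = n%:R * (n%:R * A) ^+ 2 * n%:R); last by ring.
by rewrite ler_peMr ?mulr_ge0 ?exprn_ge0 ?ler1n.
Qed.

Lemma polar_diagconj_le x (A B : R) : x \in unitmx ->
  (forall i j, normc (x i j) <= A) -> (forall i j, normc (invmx x i j) <= B) ->
  exists (Q W : 'M[R[i]]_n) (r : 'rV[R]_n), [/\ Q \is unitarymx, W \is unitarymx,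
    x = diagconj Q (map_mx (real_complex R) r) *m W &
    forall k, [/\ 0 < r 0 k, r 0 k <= n%:R ^+ 2 * A & (r 0 k)^-1 <= n%:R ^+ 2 * B]].
Proof.
move=> xu x_le xV_le.
have [Q [W [r [Qunitary Wunitary xE r_spec]]]] := polar_diagconj xu.
exists Q, W, r; split => // k; have [r0 r2 rV2] := r_spec k.
have n2A : 0 <= n%:R ^+ 2 * A.
  by rewrite mulr_ge0 ?exprn_ge0 // (le_trans (normc_ge0 _) (x_le k k)).
have n2B : 0 <= n%:R ^+ 2 * B.
  by rewrite mulr_ge0 ?exprn_ge0 // (le_trans (normc_ge0 _) (xV_le k k)).
have rV0 : 0 <= (r 0 k)^-1 by rewrite invr_ge0 ltW.
split => //; rewrite -(ler_pXn2r (n := 2)) ?nnegrE ?(ltW r0) //.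
  by rewrite r2 row_norm2_unitary_le.
rewrite exprVn rV2 row_norm2_unitary_le // => i j.
by rewrite !mxE normc_conj.
Qed.
End UnitaryPolar.

Section Semicharacter.
Variables (R : rcfType) (n : nat) (f : 'M[R[i]]_n -> R).
Local Notation normc := (@Normc.normc R).
Implicit Types (Q W : 'M[R[i]]_n) (w : 'rV[R[i]]_n).
Hypothesis f_ge1 : forall x, x \in unitmx -> 1 <= f x.
Hypothesis f_mul : forall x y, x \in unitmx -> y \in unitmx -> f (x *m y) <= f x * f y.

Lemma semichar_diagconjX Q w m : Q \in unitmx -> (forall k, w 0 k != 0) -> (0 < m)%N ->
  f (diagconj Q (\row_k w 0 k ^+ m)) <= f (diagconj Q w) ^+ m.
Proof.
move=> Qu w0; case: m => // m _; have wu := diagconj_unit Qu w0.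
elim: m => [|m IHm].
  by rewrite expr1 (_ : \row_k _ = w) //; apply/rowP => k; rewrite mxE.
have -> : \row_k w 0 k ^+ m.+2 = \row_k ((\row_j w 0 j ^+ m.+1) 0 k * w 0 k).
  by apply/rowP => k; rewrite !mxE exprSr.
have wmu : diagconj Q (\row_k w 0 k ^+ m.+1) \in unitmx.
  by apply: diagconj_unit => // k; rewrite mxE expf_neq0.
rewrite -(diagconjM _ _ Qu) exprSr; apply: le_trans (f_mul wmu wu) _.
by rewrite ler_pM2r ?(lt_le_trans ltr01 (f_ge1 wu)).
Qed.

Variables (M e eps : R).
Hypothesis f_near1 : forall y,
  (forall i j, normc ((1%:M - y) i j) < e) -> y \in unitmx -> f y <= M.
Hypothesis eps_gt0 : 0 < eps.
Hypothesis eps_e : n%:R * eps < e.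

Lemma semichar_diagconj_near1 Q w : Q \is unitarymx -> (forall k, w 0 k != 0) ->
  (forall k, normc (w 0 k - 1) <= eps) -> f (diagconj Q w) <= M.
Proof.
move=> Qunitary w0 w_eps; apply: f_near1 => [i j|].
  exact: le_lt_trans (normc_diagconj_subr1 i j Qunitary w_eps) eps_e.
exact: diagconj_unit (unitarymx_unit Qunitary) w0.
Qed.

Lemma semichar_diagconj_root_near1 Q w m : Q \is unitarymx -> (0 < m)%N ->
  (forall k, w 0 k != 0) -> (forall k, normc (w 0 k - 1) <= eps) ->
  f (diagconj Q (\row_k w 0 k ^+ m)) <= M ^+ m.
Proof.
move=> Qunitary m0 w0 w_eps; have Qu := unitarymx_unit Qunitary.
have fw_ge0 : 0 <= f (diagconj Q w) := le_trans ler01 (f_ge1 (diagconj_unit Qu w0)).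
have fw_le := semichar_diagconj_near1 Qunitary w0 w_eps.
apply: le_trans (semichar_diagconjX Qu w0 m0) _.
by rewrite lerXn2r ?nnegrE // (le_trans fw_ge0 fw_le).
Qed.

Lemma semichar_unitary_le W K : 4%:R / 2%:R ^+ K <= eps ^+ 2 -> W \is unitarymx ->
  f W <= M ^+ (2 ^ K).
Proof.
move=> K_eps Wunitary; have [Q [d [Qunitary -> d1]]] := unitary_diagconj Wunitary.
pose w := \row_k iter K (@sqrtc R) (d 0 k).
have -> : d = \row_k w 0 k ^+ (2 ^ K) by apply/rowP => k; rewrite !mxE iter_sqrtcX.
apply: semichar_diagconj_root_near1 => // [|k|k]; first by rewrite expn_gt0.
  rewrite mxE; apply: contra_eqN (d1 k) => /eqP w0.
  rewrite -(iter_sqrtcX K (d 0 k)) w0 expr0n gtn_eqF ?expn_gt0 // mulr0n.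
  by rewrite Normc.normc0 eq_sym oner_neq0.
rewrite -(ler_pXn2r (n := 2)) ?nnegrE ?normc_ge0 ?(ltW eps_gt0) //.
by rewrite mxE; apply: le_trans (iter_sqrtc_unit K (d1 k)) K_eps.
Qed.

Lemma semichar_diagconj_real_le Q (r : 'rV[R]_n) j : Q \is unitarymx ->
  (forall k, [/\ 0 < r 0 k, r 0 k <= (1 + eps) ^+ (2 ^ j)
               & (r 0 k)^-1 <= (1 + eps) ^+ (2 ^ j)]) ->
  f (diagconj Q (map_mx (real_complex R) r)) <= M ^+ (2 ^ j).
Proof.
move=> Qunitary r_le; pose w := \row_k (iter j Num.sqrt (r 0 k))%:C.
have eps1_ge0 : 0 <= 1 + eps by rewrite ltW // ltr_pwDr.
have -> : map_mx (real_complex R) r = \row_k w 0 k ^+ (2 ^ j).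
  apply/rowP => k; have [r0 _ _] := r_le k.
  by rewrite !mxE -iter_sqrtc_real ?ltW // iter_sqrtcX.
apply: semichar_diagconj_root_near1 => // [|k|k]; first by rewrite expn_gt0.
  have [r0 _ _] := r_le k; rewrite mxE -(rmorph0 (real_complex R)).
  by rewrite (inj_eq (@complexI R)) gt_eqF ?iter_sqrtr_gt0.
have [r0 rle rVle] := r_le k.
rewrite mxE -(rmorph1 (real_complex R)) -rmorphB normc_real.
apply: normr_subr1_le; first exact: iter_sqrtr_gt0.
  exact: iter_sqrtr_le.
by rewrite -iter_sqrtrV ?(ltW r0) // iter_sqrtr_le.
Qed.

End Semicharacter.

Section Majorization.
Variables (R : realType) (n : nat) (f : 'M[R[i]]_n -> R).
Hypothesis f_ge1 : forall x, x \in unitmx -> 1 <= f x.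
Hypothesis f_mul : forall x y, x \in unitmx -> y \in unitmx -> f (x *m y) <= f x * f y.
Variables (M e : R).
Hypothesis f_near1 : forall y,
  (forall i j, Normc.normc ((1%:M - y) i j) < e) -> y \in unitmx -> f y <= M.
Hypothesis e_gt0 : 0 < e.

Let eps := e / (n%:R + 1).

Let eps_gt0 : 0 < eps.
Proof. by rewrite divr_gt0 // ltr_wpDl. Qed.

Let eps_e : n%:R * eps < e.
Proof.
by rewrite /eps mulrA ltr_pdivrMr ?ltr_wpDl // mulrDr mulr1 [e * _]mulrC ltrDl.
Qed.

Let M_ge1 : 1 <= M.
Proof.
apply: le_trans (f_ge1 (unitmx1 _ _)) (f_near1 _ (unitmx1 _ _)) => i j.
by rewrite subrr mxE Normc.normc0.
Qed.

Lemma semichar_unitary_bounded :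
  exists2 C, 1 <= C & forall W, W \is unitarymx -> f W <= C.
Proof.
have [K le_K] := exists_exprn_ge (4%:R / eps ^+ 2) (ltr1n R 2).
have K_eps : 4%:R / 2%:R ^+ K <= eps ^+ 2.
  by rewrite ler_pdivrMr ?exprn_gt0 // mulrC -ler_pdivrMr ?exprn_gt0.
exists (M ^+ (2 ^ K)); first exact: exprn_ege1.
by move=> W; apply: (semichar_unitary_le f_ge1 f_mul f_near1 eps_gt0 eps_e K_eps).
Qed.

Lemma semichar_positive_poly :
  exists2 B, 1 <= B & exists N, forall Q (r : 'rV[R]_n) t,
    Q \is unitarymx -> 1 <= t ->
    (forall k, [/\ 0 < r 0 k, r 0 k <= t & (r 0 k)^-1 <= t]) ->
    f (diagconj Q (map_mx (real_complex R) r)) <= B * t ^+ N.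
Proof.
have eps1 : 1 < 1 + eps by rewrite ltrDl.
have [N poly] := exprn2_ge_poly eps1 (le_trans ler01 M_ge1).
exists ((1 + eps) ^+ N); first by rewrite exprn_ege1 ?ltW.
exists (2 * N)%N => Q r t Qunitary t_ge1 r_le; have [j [tj Mj]] := poly t t_ge1.
apply: le_trans Mj.
apply: (semichar_diagconj_real_le f_ge1 f_mul f_near1 eps_gt0 eps_e Qunitary) => k.
by have [r0 rt rVt] := r_le k; split; rewrite ?(le_trans _ tj).
Qed.

End Majorization.

Lemma mul_delta_mx_sandwich (K : pzRingType) n (x : 'M[K]_n) i j :
  delta_mx i i *m x *m delta_mx j j = x i j *: delta_mx i j.
Proof.
apply/matrixP => a b; rewrite !mxE (bigD1 j) //= big1 ?addr0; last first.
  by move=> l lj; rewrite [delta_mx j j l b]mxE (negbTE lj) /= mulr0.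
rewrite [delta_mx j j j b]mxE eqxx /= mxE (bigD1 i) //= big1 ?addr0; last first.
  by move=> l li; rewrite [delta_mx i i a l]mxE (negbTE li) andbF /= mul0r.
rewrite !mxE eqxx andbT.
by case: (a == i); case: (b == j); rewrite /= ?mul1r ?mulr1 ?mul0r ?mulr0.
Qed.

Section SubmultiplicativeNorm.
Variables (R : realType) (n : nat) (nm : 'M[R[i]]_n -> R).
Hypothesis nmP : submult_mxnorm nm.
Local Notation normc := (@Normc.normc R).

Lemma submult_mxnorm_entry_le :
  exists2 K : R, 0 <= K & forall (x : 'M[R[i]]_n) i j, normc (x i j) <= K * nm x.
Proof.
have [nm_ge0 nm_eq0 nmZ _ nmM] := nmP.
have nm_delta_gt0 i j : 0 < nm (delta_mx i j).
  rewrite lt0r nm_ge0 andbT; apply/eqP => /nm_eq0 /matrixP /(_ i j).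
  by rewrite !mxE !eqxx /= => /eqP; rewrite oner_eq0.
(* |x_ij| nm(E_ij) = nm(E_ii x E_jj) <= nm(E_ii) nm(x) nm(E_jj) *)
pose g i j := nm (delta_mx i i) * nm (delta_mx j j) / nm (delta_mx i j).
have g_ge0 i j : 0 <= g i j by rewrite !mulr_ge0 ?invr_ge0.
exists (\sum_i \sum_j g i j) => [|x i j]; first by do 2!apply: sumr_ge0 => ? _.
apply: le_trans (_ : g i j * nm x <= _); last first.
  rewrite ler_wpM2r // (bigD1 i) //= (bigD1 j) //= -addrA lerDl addr_ge0 //.
    by apply: sumr_ge0.
  by apply: sumr_ge0 => k _; apply: sumr_ge0.
rewrite /g mulrAC ler_pdivlMr // -nmZ -mul_delta_mx_sandwich.
by rewrite mulrAC; apply: le_trans (nmM _ _) _; rewrite ler_pM2r ?nmM.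
Qed.

Lemma submult_mxnorm_inv_ge1 x : (0 < n)%N -> x \in unitmx ->
  1 <= Num.max (nm x) (nm (invmx x)).
Proof.
have [nm_ge0 nm_eq0 _ _ nmM] := nmP; move=> n_gt0 xu.
have nm1_gt0 : 0 < nm 1%:M.
  rewrite lt0r nm_ge0 andbT; apply/eqP => /nm_eq0 /matrixP.
  move=> /(_ (Ordinal n_gt0) (Ordinal n_gt0)).
  by rewrite !mxE eqxx /= => /eqP; rewrite oner_eq0.
have nm1_ge1 : 1 <= nm 1%:M.
  have : nm 1%:M <= nm 1%:M * nm 1%:M by rewrite -{1}(mulmx1 1%:M) nmM.
  by rewrite ler_pMr.
have : nm 1%:M <= nm x * nm (invmx x) by rewrite -(mulmxV xu) nmM.
have := nm_ge0 x; have := nm_ge0 (invmx x).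
have : nm x <= Num.max (nm x) (nm (invmx x)) by rewrite le_max lexx.
have : nm (invmx x) <= Num.max (nm x) (nm (invmx x)) by rewrite le_max lexx orbT.
nra.
Qed.

Lemma submult_mxnorm_polar : exists2 c : R, 1 <= c & forall x, x \in unitmx ->
  exists (Q W : 'M[R[i]]_n) (r : 'rV[R]_n), [/\ Q \is unitarymx, W \is unitarymx,
    x = diagconj Q (map_mx (real_complex R) r) *m W &
    forall k, [/\ 0 < r 0 k, r 0 k <= c * Num.max (nm x) (nm (invmx x))
                & (r 0 k)^-1 <= c * Num.max (nm x) (nm (invmx x))]].
Proof.
have [K K_ge0 entry_le] := submult_mxnorm_entry_le.
exists (n%:R ^+ 2 * K + 1) => [|x xu]; first by rewrite lerDr mulr_ge0 ?exprn_ge0.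
have [nm_ge0 _ _ _ _] := nmP; set s := Num.max _ _.
have s_ge0 : 0 <= s by rewrite le_max nm_ge0.
have entry_s y : nm y <= s -> forall i j, normc (y i j) <= K * s.
  by move=> ys i j; apply: le_trans (entry_le y i j) _; rewrite ler_wpM2l.
have [||Q [W [r [Qunitary Wunitary xE r_le]]]] :=
  polar_diagconj_le xu (entry_s x _) (entry_s (invmx x) _).
- by rewrite le_max lexx.
- by rewrite le_max lexx orbT.
have cs : n%:R ^+ 2 * (K * s) <= (n%:R ^+ 2 * K + 1) * s.
  by rewrite mulrA ler_wpM2r ?lerDl.
exists Q, W, r; split => // k; have [r0 rle rVle] := r_le k.
by split; rewrite // (le_trans _ cs).
Qed.

End SubmultiplicativeNorm.

Lemma near1_entrywise (R : realType) n (P : 'M[R[i]]_n -> Prop) :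
  (\forall y \near (1%:M : 'M[R[i]]_n), P y) ->
  exists2 e : R, 0 < e &
    forall y, (forall i j, Normc.normc ((1%:M - y) i j) < e) -> P y.
Proof.
move=> /nbhs_ballP [e e0 e_ball]; have := e0; rewrite /= ltcE => /andP[/eqP Ime Ree].
have eE : e = (complex.Re e)%:C by move: Ime; case: (e) => a b /= ->.
exists (complex.Re e) => // y y_near; apply: e_ball; split => // i j.
by rewrite /ball /= eE; have := y_near i j; rewrite !mxE -ltcR.
Qed.

Theorem mainTheorem5 (R : realType) (n : nat) (nm : 'M[R[i]]_n -> R) :
  submult_mxnorm nm ->
  forall f : 'M[R[i]]_n -> R, semicharacter_GL f ->
  exists (C : R) (N : nat), 1 <= C /\
    (forall x : 'M[R[i]]_n, x \in unitmx -> f x <= rNC nm C N x).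
Proof.
move=> nmP f [f_ge1 f_mul f_loc].
have [n0|n_gt0] := posnP n.
  exists (Num.max 1 (f 0)), 0%N; split => [|x _]; first by rewrite le_max lexx.
  rewrite /rNC expr0 mulr1 (_ : x = 0) ?le_max ?lexx ?orbT //.
  by apply/matrixP => i; have := ltn_ord i; rewrite [X in (_ < X)%N]n0.
have [M M_near] := f_loc 1%:M (unitmx1 _ _).
have [e e_gt0 f_near1] := near1_entrywise M_near.
have [C1 C1_ge1 W_le] := semichar_unitary_bounded f_ge1 f_mul f_near1 e_gt0.
have [B B_ge1 [N P_le]] := semichar_positive_poly f_ge1 f_mul f_near1 e_gt0.
have [c c_ge1 polar] := submult_mxnorm_polar nmP.
exists (B * c ^+ N * C1), N; split => [|x xu]; first by rewrite !mulr_ege1 ?exprn_ege1.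
have s_ge1 := submult_mxnorm_inv_ge1 nmP n_gt0 xu.
have [Q [W [r [Qunitary Wunitary xE r_le]]]] := polar x xu.
have Qu := unitarymx_unit Qunitary; have Wu := unitarymx_unit Wunitary.
have Pu : diagconj Q (map_mx (real_complex R) r) \in unitmx.
  by apply: diagconj_real_unit => // k; case: (r_le k).
rewrite /rNC [in f x]xE; apply: le_trans (f_mul _ _ Pu Wu) _.
rewrite mulrAC -[B * _ * _]mulrA -exprMn.
apply: ler_pM; rewrite ?(le_trans ler01 (f_ge1 _ _)) ?W_le //.
by apply: P_le => //; apply: mulr_ege1.
Qed.
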